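(* Let ${\cal M}$ be the set of matrix-valued functions $L(\lambda)=(1+\lambda^3)^{-1/3}\begin{pmatrix}1&\lambda f&0\\0&1&\lambda g\\\lambda h&0&1\end{pmatrix}$ with $f,g,h\in\mathbb C$, $fgh=1$ (a fixed branch of the cube root being used throughout). Let $L_i\in{\cal M}$, $i=1,2,3,4$, with parameters $(f_i,g_i,h_i)$, satisfy $L_1L_2=L_3L_4$, and suppose that the off-diagonal parts of $L_1,L_2$ are componentwise distinct from the off-diagonal parts of $L_3,L_4$ respectively (i.e. $f_1\ne f_3$, $g_1\ne g_3$, $h_1\ne h_3$, $f_2\ne f_4$, $g_2\ne g_4$, $h_2\ne h_4$). Then there exists $L_0\in{\cal M}$ such that $L_0L_1L_2=L_0L_3L_4=I$. *)

From HB Require Import structures.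
From mathcomp Require Import all_boot all_order all_algebra.
From mathcomp Require Import complex reals.
Set Implicit Arguments. Unset Strict Implicit. Unset Printing Implicit Defensive.
Import Order.TTheory GRing.Theory Num.Theory.
Local Open Scope ring_scope.

Definition Mpart (C : ringType) (f g h l : C) : 'M[C]_3 :=
  \matrix_(i < 3, j < 3)
    if i == j then 1
    else if (i == 0 :> nat) && (j == 1 :> nat) then l * f
    else if (i == 1 :> nat) && (j == 2 :> nat) then l * g
    else if (i == 2 :> nat) && (j == 0 :> nat) then l * h
    else 0.

(* L(l) = (1 + l^3)^(-1/3) * Mpart, where the cube root is given by a fixed
   branch cbrt (any function with cbrt z ^+ 3 = z). *)
Definition Lmat (R : realType) (cbrt : R[i] -> R[i]) (f g h l : R[i]) : 'M[R[i]]_3 :=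
  (cbrt (1 + l ^+ 3))^-1 *: Mpart f g h l.

From HB Require Import structures.
From mathcomp Require Import all_boot all_order all_algebra.
From mathcomp Require Import complex reals ring.
Set Implicit Arguments. Unset Strict Implicit. Unset Printing Implicit Defensive.
Import Order.TTheory GRing.Theory Num.Theory.
Local Open Scope ring_scope.

(* Write L(l) = c^-1 (1 + l N) with c^3 = 1 + l^3 and N the cyclic matrix with
   entries f, g, h, so that N^3 = f g h and a product N N' of two such matrices
   lives on the complementary cyclic diagonal.  Comparing L1 L2 = L3 L4 at l = 1
   therefore gives S := N1 + N2 = N3 + N4 and N1 N2 = N3 N4.  Solving these
   equations for f2, g2, h2 shows N1 N2 = S^2 and S^3 = -1, hence
   (1 - l S)(1 + l N1)(1 + l N2) = (1 - l S)(1 + l S + l^2 S^2) = 1 + l^3, and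
   L0 := L(-S) is a common left inverse of L1 L2 and L3 L4. *)

Section UnipotentFactors.
Variables (R : comNzRingType) (A : algType R).
Implicit Types (l : R) (a b s : A).

Lemma unipotent_mul l a b :
  (1 + l *: a) * (1 + l *: b) = 1 + l *: (a + b) + l ^+ 2 *: (a * b).
Proof.
rewrite mulrDl !mulrDr !mul1r mulr1 -scalerAl -scalerAr scalerA -expr2 scalerDr.
by rewrite !addrA (addrAC 1).
Qed.

Lemma unipotent_cube_inverse l s :
  (1 - l *: s) * (1 + l *: s + l ^+ 2 *: s ^+ 2) = 1 - l ^+ 3 *: s ^+ 3.
Proof.
have := subrX1 (l *: s) 3; rewrite !big_ord_recr big_ord0 /= add0r expr0 expr1.
rewrite !exprZn => /(congr1 -%R); rewrite !opprB => ->.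
by rewrite -mulNr opprB.
Qed.

End UnipotentFactors.

Lemma refactorization_relations (F : fieldType)
    (f1 g1 h1 f2 g2 h2 f3 g3 h3 f4 g4 h4 : F) :
  f1 * g1 * h1 = 1 -> f3 * g3 * h3 = 1 -> f1 != f3 -> g1 != g3 -> h1 != h3 ->
  (f1 + f2, g1 + g2, h1 + h2) = (f3 + f4, g3 + g4, h3 + h4) ->
  (f1 * g2, g1 * h2, h1 * f2) = (f3 * g4, g3 * h4, h3 * f4) ->
  [/\ f1 * g2 = (f1 + f2) * (g1 + g2), g1 * h2 = (g1 + g2) * (h1 + h2),
      h1 * f2 = (h1 + h2) * (f1 + f2) & (f1 + f2) * (g1 + g2) * (h1 + h2) = -1].
Proof.
(* The products determine f2, g2, h2 linearly, e.g. f2 (h1 - h3) = h3 (f1 - f3);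
   after substitution each claim is a rational identity in f1, g1, f3, g3. *)
move=> fgh1 fgh3 nf ng nh [sf sg sh] [pfg pgh phf].
have [df dg dh] : [/\ f1 - f3 != 0, g1 - g3 != 0 & h1 - h3 != 0] by rewrite !subr_eq0.
have unit_factors (a b c : F) : a * b * c = 1 -> [/\ a != 0, b != 0 & c != 0].
  move=> abc; have : a * b * c != 0 by rewrite abc oner_neq0.
  by rewrite !mulf_eq0 !negb_or => /andP[/andP[-> ->] ->].
have [f1_0 g1_0 _] := unit_factors _ _ _ fgh1.
have [f3_0 g3_0 _] := unit_factors _ _ _ fgh3.
have ef4 : f4 = f1 + f2 - f3 by rewrite sf addrAC subrr add0r.
have eg4 : g4 = g1 + g2 - g3 by rewrite sg addrAC subrr add0r.
have eh4 : h4 = h1 + h2 - h3 by rewrite sh addrAC subrr add0r.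
have ef2 : f2 = h3 * (f1 - f3) / (h1 - h3).
  by apply: (mulIf dh); rewrite divfK // mulrBr (mulrC f2 h1) phf ef4; ring.
have eg2 : g2 = f3 * (g1 - g3) / (f1 - f3).
  by apply: (mulIf df); rewrite divfK // mulrBr (mulrC g2 f1) pfg eg4; ring.
have eh2 : h2 = g3 * (h1 - h3) / (g1 - g3).
  by apply: (mulIf dg); rewrite divfK // mulrBr (mulrC h2 g1) pgh eh4; ring.
have eh1 : h1 = (f1 * g1)^-1 by rewrite -[h1](mulKf (mulf_neq0 f1_0 g1_0)) fgh1 mulr1.
have eh3 : h3 = (f3 * g3)^-1 by rewrite -[h3](mulKf (mulf_neq0 f3_0 g3_0)) fgh3 mulr1.
have dfg : f3 * g3 + -1 * (f1 * g1) != 0.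
  by rewrite mulN1r subr_eq0; apply: contra nh => /eqP fg13; rewrite eh1 eh3 fg13.
rewrite ef2 eg2 eh2 eh1 eh3.
by split; field; rewrite ?df ?dg ?dfg ?f1_0 ?g1_0 ?f3_0 ?g3_0.
Qed.

Section CyclicMatrices.
Variable C : comNzRingType.
Implicit Types f g h a b c l : C.

Definition cycmx f g h : 'M[C]_3 :=
  \matrix_(i < 3, j < 3)
    if (i == 0 :> nat) && (j == 1 :> nat) then f
    else if (i == 1 :> nat) && (j == 2 :> nat) then g
    else if (i == 2 :> nat) && (j == 0 :> nat) then h
    else 0.

Definition cyc2mx a b c : 'M[C]_3 :=
  \matrix_(i < 3, j < 3)
    if (i == 0 :> nat) && (j == 2 :> nat) then a
    else if (i == 1 :> nat) && (j == 0 :> nat) then b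
    else if (i == 2 :> nat) && (j == 1 :> nat) then c
    else 0.

Lemma Mpart_cycmx f g h l : Mpart f g h l = 1 + l *: cycmx f g h.
Proof.
apply/matrixP => -[[|[|[|i]]] Hi] -[[|[|[|j]]] Hj] //;
  by rewrite !mxE /= ?mulr0 ?addr0 ?add0r.
Qed.

Lemma cycmxD f g h f' g' h' :
  cycmx f g h + cycmx f' g' h' = cycmx (f + f') (g + g') (h + h').
Proof.
apply/matrixP => -[[|[|[|i]]] Hi] -[[|[|[|j]]] Hj] //;
  by rewrite !mxE /= ?addr0.
Qed.

Lemma cycmxN f g h : cycmx (- f) (- g) (- h) = - cycmx f g h.
Proof.
apply/matrixP => -[[|[|[|i]]] Hi] -[[|[|[|j]]] Hj] //;
  by rewrite !mxE /= ?oppr0.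
Qed.

Lemma cycmx_mul f g h f' g' h' :
  cycmx f g h *m cycmx f' g' h' = cyc2mx (f * g') (g * h') (h * f').
Proof.
apply/matrixP => -[[|[|[|i]]] Hi] -[[|[|[|j]]] Hj] //;
  rewrite !mxE !big_ord_recr big_ord0 /= !mxE /=; ring.
Qed.

Lemma cycmx_cube f g h : cycmx f g h ^+ 3 = (f * g * h)%:M.
Proof.
rewrite !exprS expr0 mulr1 -!mulmxE cycmx_mul.
apply/matrixP => -[[|[|[|i]]] Hi] -[[|[|[|j]]] Hj] //;
  rewrite !mxE !big_ord_recr big_ord0 /= !mxE /=; ring.
Qed.

Lemma cycmx_cyc2mx_inj f g h a b c f' g' h' a' b' c' :
  cycmx f g h + cyc2mx a b c = cycmx f' g' h' + cyc2mx a' b' c' ->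
  (f, g, h) = (f', g', h') /\ (a, b, c) = (a', b', c').
Proof.
move=> E; have e i j := congr1 (fun M : 'M_3 => M (inord i) (inord j)) E.
move: (e 0 1) (e 1 2) (e 2 0) (e 0 2) (e 1 0) (e 2 1).
by rewrite !mxE !inordK //= ?addr0 ?add0r => -> -> -> -> -> ->.
Qed.

Lemma Mpart_mul f g h f' g' h' l :
  Mpart f g h l *m Mpart f' g' h' l =
  1 + l *: cycmx (f + f') (g + g') (h + h') + l ^+ 2 *: cyc2mx (f * g') (g * h') (h * f').
Proof. by rewrite !Mpart_cycmx mulmxE unipotent_mul cycmxD -mulmxE cycmx_mul. Qed.

Lemma Mpart_left_inverse f1 g1 h1 f2 g2 h2 l :
  f1 * g2 = (f1 + f2) * (g1 + g2) -> g1 * h2 = (g1 + g2) * (h1 + h2) ->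
  h1 * f2 = (h1 + h2) * (f1 + f2) -> (f1 + f2) * (g1 + g2) * (h1 + h2) = -1 ->
  Mpart (- (f1 + f2)) (- (g1 + g2)) (- (h1 + h2)) l *m Mpart f1 g1 h1 l *m Mpart f2 g2 h2 l
  = (1 + l ^+ 3)%:M.
Proof.
move=> eFG eGH eHF eFGH.
rewrite -mulmxA Mpart_mul eFG eGH eHF -cycmx_mul Mpart_cycmx cycmxN scalerN.
rewrite !mulmxE -expr2 unipotent_cube_inverse cycmx_cube eFGH.
by rewrite scale_scalar_mx mulrN1 raddfN opprK raddfD.
Qed.

End CyclicMatrices.

Section ScaledProducts.
Variables (F : fieldType) (n : nat).
Implicit Types (a c z : F) (A B C D : 'M[F]_n).

Lemma scalemxMM a c A B : a *: A *m (c *: B) = (a * c) *: (A *m B).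
Proof. by rewrite -scalemxAl -scalemxAr scalerA. Qed.

Lemma scaled_mulmx_inj a A B C D : a != 0 ->
  a *: A *m (a *: B) = a *: C *m (a *: D) -> A *m B = C *m D.
Proof. by move=> a0; rewrite !scalemxMM => /(scalemx_inj (mulf_neq0 a0 a0)). Qed.

Lemma cube_root_normalized_inverse c z A B C : c ^+ 3 = z -> c != 0 ->
  A *m B *m C = z%:M -> c^-1 *: A *m (c^-1 *: B) *m (c^-1 *: C) = 1%:M.
Proof.
move=> <- c0 ABC; rewrite !scalemxMM ABC scale_scalar_mx -expr2 -exprSr.
by rewrite exprVn mulVf // expf_neq0.
Qed.

End ScaledProducts.

Section CubeRootNormalization.
Variables (R : realType) (cbrt : R[i] -> R[i]).
Hypothesis cbrtK : forall z : R[i], cbrt z ^+ 3 = z.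
Implicit Types f g h l : R[i].

Lemma cbrt_eq0 z : (cbrt z == 0) = (z == 0).
Proof. by rewrite -[in RHS](cbrtK z) expf_eq0. Qed.

Lemma Mpart_mul_eq f1 g1 h1 f2 g2 h2 f3 g3 h3 f4 g4 h4 l : 1 + l ^+ 3 != 0 ->
  Lmat cbrt f1 g1 h1 l *m Lmat cbrt f2 g2 h2 l = Lmat cbrt f3 g3 h3 l *m Lmat cbrt f4 g4 h4 l ->
  Mpart f1 g1 h1 l *m Mpart f2 g2 h2 l = Mpart f3 g3 h3 l *m Mpart f4 g4 h4 l.
Proof. by move=> nz /scaled_mulmx_inj; apply; rewrite invr_eq0 cbrt_eq0. Qed.

Lemma Lmat_left_inverse f1 g1 h1 f2 g2 h2 l : 1 + l ^+ 3 != 0 ->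
  f1 * g2 = (f1 + f2) * (g1 + g2) -> g1 * h2 = (g1 + g2) * (h1 + h2) ->
  h1 * f2 = (h1 + h2) * (f1 + f2) -> (f1 + f2) * (g1 + g2) * (h1 + h2) = -1 ->
  Lmat cbrt (- (f1 + f2)) (- (g1 + g2)) (- (h1 + h2)) l *m Lmat cbrt f1 g1 h1 l
    *m Lmat cbrt f2 g2 h2 l = 1%:M.
Proof.
move=> nz eFG eGH eHF eFGH.
apply: cube_root_normalized_inverse (cbrtK _) _ _; first by rewrite cbrt_eq0.
exact: Mpart_left_inverse.
Qed.

End CubeRootNormalization.

Theorem lemma29 (R : realType) (cbrt : R[i] -> R[i])
  (hcbrt : forall z : R[i], cbrt z ^+ 3 = z)
  (f1 g1 h1 f2 g2 h2 f3 g3 h3 f4 g4 h4 : R[i])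
  (hM1 : f1 * g1 * h1 = 1) (hM2 : f2 * g2 * h2 = 1)
  (hM3 : f3 * g3 * h3 = 1) (hM4 : f4 * g4 * h4 = 1)
  (heq : forall l : R[i], 1 + l ^+ 3 != 0 ->
     Lmat cbrt f1 g1 h1 l *m Lmat cbrt f2 g2 h2 l
     = Lmat cbrt f3 g3 h3 l *m Lmat cbrt f4 g4 h4 l)
  (hf13 : f1 != f3) (hg13 : g1 != g3) (hh13 : h1 != h3)
  (hf24 : f2 != f4) (hg24 : g2 != g4) (hh24 : h2 != h4) :
  exists f0 g0 h0 : R[i], f0 * g0 * h0 = 1 /\
    forall l : R[i], 1 + l ^+ 3 != 0 ->
      Lmat cbrt f0 g0 h0 l *m Lmat cbrt f1 g1 h1 l *m Lmat cbrt f2 g2 h2 l = 1%:M /\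
      Lmat cbrt f0 g0 h0 l *m Lmat cbrt f3 g3 h3 l *m Lmat cbrt f4 g4 h4 l = 1%:M.
Proof.
have nz1 : 1 + 1 ^+ 3 != 0 :> R[i] by rewrite expr1n -[1 + 1]/(2%:R) pnatr_eq0.
have := Mpart_mul_eq hcbrt nz1 (heq 1 nz1).
rewrite !Mpart_mul expr1n !scale1r -!addrA => /addrI /cycmx_cyc2mx_inj[sums prods].
have [eFG eGH eHF eFGH] := refactorization_relations hM1 hM3 hf13 hg13 hh13 sums prods.
exists (- (f1 + f2)), (- (g1 + g2)), (- (h1 + h2)); split.
  by rewrite mulrNN mulrN eFGH opprK.
move=> l nz; split; first exact: Lmat_left_inverse.
(* L0 and the relations only involve the sums and products, which agree for the
   two factorizations. *)
move: sums prods eFG eGH eHF eFGH => [-> -> ->] [-> -> ->] *.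
exact: Lmat_left_inverse.
Qed.
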